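(* Let $E$ be a Banach space and let $G:E\times\mathbb{R}\to E\times\mathbb{R}$, $G(e,t)=(e,g(e,t))$, be a continuous proper map. Suppose that no point of $E\times\mathbb{R}$ has three preimages under $G$. If some point has two preimages, then $G$ is a global fold, that is, there are homeomorphisms $\sigma_1,\sigma_2:E\times\mathbb{R}\to E\times\mathbb{R}$ of the form $\sigma_1(e,t)=(e,g_1(e,t))$, $\sigma_2(e,t)=(e,g_2(e,t))$ such that $(\sigma_2\circ G\circ\sigma_1)(e,t)=(e,-|t|)$ for all $(e,t)$. Otherwise, $G$ is a homeomorphism.
   Context: A continuous map is proper if preimages of compact sets are compact. *)

From HB Require Import structures.
From mathcomp Require Import all_boot all_order all_algebra.
From mathcomp Require Import all_classical all_reals all_analysis.
Set Implicit Arguments. Unset Strict Implicit. Unset Printing Implicit Defensive.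
Import Order.TTheory GRing.Theory Num.Theory.
Import numFieldNormedType.Exports.
Local Open Scope classical_set_scope.
Local Open Scope ring_scope.

Definition proper_map (T U : topologicalType) (f : T -> U) : Prop :=
  continuous f /\ forall K : set U, compact K -> compact (f @^-1` K).

Definition homeomorphism (T U : topologicalType) (f : T -> U) : Prop :=
  exists g : U -> T, [/\ continuous f, continuous g, cancel f g & cancel g f].

Definition has_two_preimages (T U : Type) (f : T -> U) (y : U) : Prop :=
  exists x1 x2, [/\ x1 <> x2, f x1 = y & f x2 = y].

Definition has_three_preimages (T U : Type) (f : T -> U) (y : U) : Prop :=
  exists x1 x2 x3, [/\ x1 <> x2, x1 <> x3, x2 <> x3 & [/\ f x1 = y, f x2 = y & f x3 = y]].

From HB Require Import structures.
From mathcomp Require Import all_boot all_order all_algebra.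
From mathcomp Require Import all_classical all_reals all_analysis.
From mathcomp Require Import lra.
Set Implicit Arguments. Unset Strict Implicit. Unset Printing Implicit Defensive.
Import Order.TTheory GRing.Theory Num.Theory.
Import numFieldNormedType.Exports.
Local Open Scope classical_set_scope.
Local Open Scope ring_scope.

(* By properness, every fibre g(e, .) is continuous with |g(e, t)| -> +oo as
   |t| -> +oo, so it tends to +oo or -oo at each end, and the sign at each end
   is the same for all e: along a segment of E the zeros of g stay in a
   bounded strip |t| <= B.  When no value is taken three times, a fibre with
   opposite limits at the two ends is injective and onto, while a fibre with
   both limits -oo is a peak: strictly increasing up to its maximum at m(e),
   strictly decreasing after it, with m continuous.  So either every fibre is
   a bijection of R, and G is a homeomorphism because the fibrewise inverse is
   continuous, or (after replacing g by -g) every fibre is a peak, and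
   unfolding the two branches of each peak onto (-oo, 0] and [0, +oo) gives
   the global fold. *)

Section ProductContinuity.
Context {T U V W : topologicalType}.

Lemma continuous_pair (a : T -> U) (b : T -> V) :
  continuous a -> continuous b -> continuous (fun x => (a x, b x)).
Proof. by move=> ac bc x; apply: cvg_pair; [exact: ac | exact: bc]. Qed.

Lemma continuous_comp_pair (f : U * V -> W) (a : T -> U) (b : T -> V) :
  continuous f -> continuous a -> continuous b -> continuous (fun x => f (a x, b x)).
Proof.
by move=> fc ac bc x; apply: continuous_comp; [exact: continuous_pair | exact: fc].
Qed.

End ProductContinuity.

Lemma homeomorphism_comp (T U V : topologicalType) (f : T -> U) (g : U -> V) :
  homeomorphism f -> homeomorphism g -> homeomorphism (g \o f).
Proof.
move=> [f' [fc f'c ff' f'f]] [g' [gc g'c gg' g'g]]; exists (f' \o g'); split.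
- by move=> x; apply: continuous_comp; [exact: fc | exact: gc].
- by move=> x; apply: continuous_comp; [exact: g'c | exact: f'c].
- by move=> x /=; rewrite gg' ff'.
- by move=> x /=; rewrite f'f g'g.
Qed.

Lemma continuousNfun (R : numFieldType) (T : topologicalType) (f : T -> R) :
  continuous f -> continuous (- f).
Proof. by move=> fc t; exact: (continuousN (fc t)). Qed.

Section RealFunctions.
Variable R : realType.
Implicit Types (f : R -> R) (a b c s t u v : R).

Definition at_most_two_to_one f :=
  forall a b c, a < b -> b < c -> f a = f b -> f b <> f c.

Lemma at_most_two_to_oneN f :
  at_most_two_to_one f -> at_most_two_to_one (- f).
Proof. by move=> f2 a b c ab bc /oppr_inj fab /oppr_inj; exact: f2 ab bc fab. Qed.

Lemma at_most_two_to_one_reflect f :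
  at_most_two_to_one f -> at_most_two_to_one (f \o -%R).
Proof.
move=> f2 a b c ab bc /= fab fbc.
by apply: (f2 (- c) (- b) (- a)); rewrite ?ltrN2 // ?fab ?fbc.
Qed.

Lemma continuous_reflect f : continuous f -> continuous (f \o -%R).
Proof. by move=> fc t; apply: continuous_comp; [exact: opp_continuous | exact: fc]. Qed.

Lemma ivt_sign f a b v : continuous f -> a <= b -> (f a - v) * (f b - v) <= 0 ->
  exists2 c, a <= c <= b & f c = v.
Proof.
move=> fc ab fab.
have [|c /[!in_itv]/= cab fcv] := @IVT R f a b v ab (continuous_subspaceT fc).
  by case: (leP (f a) (f b)) => fab'; apply/andP; split; nra.
by exists c.
Qed.

Lemma cvgNy_preimage_right f a v : continuous f -> f @ +oo --> -oo ->
  v <= f a -> exists2 t, a <= t & f t = v.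
Proof.
move=> fc fr va; near +oo_R => b.
have ab : a <= b by near: b; apply: nbhs_pinfty_ge; exact: num_real.
have fb : f b < v by near: b; exact: cvgrNy_lt fr v.
have [|t /andP[ta _] ft] := ivt_sign fc ab (_ : (f a - v) * (f b - v) <= 0).
  by nra.
by exists t.
Unshelve. all: by end_near. Qed.

Lemma cvgNy_preimage_left f a v : continuous f -> f @ -oo --> -oo ->
  v <= f a -> exists2 t, t <= a & f t = v.
Proof.
move=> fc /cvgNy_compNP fl va.
have [|t ta ft] := cvgNy_preimage_right (a := - a) (continuous_reflect fc) fl
  (_ : v <= f (- - a)).
  by rewrite opprK.
by exists (- t); [rewrite lerNl | ].
Qed.

Lemma cvgNy_not_injective f : continuous f -> f @ -oo --> -oo -> f @ +oo --> -oo ->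
  ~ injective f.
Proof.
move=> fc fl fr finj.
have v0 : f 0 - 1 <= f 0 by lra.
have [s s0 fs] := cvgNy_preimage_left fc fl v0.
have [t t0 ft] := cvgNy_preimage_right fc fr v0.
have st : s = t by apply: finj; rewrite fs ft.
have s_eq0 : s = 0 by lra.
by move: fs; rewrite s_eq0; lra.
Qed.

Section PeakedFunctions.
Variable f : R -> R.
Hypotheses (fc : continuous f) (f2 : at_most_two_to_one f).
Hypotheses (fl : f @ -oo --> -oo) (fr : f @ +oo --> -oo).

Lemma min_lt_interior a c b : a < c -> c < b -> Num.min (f a) (f b) < f c.
Proof.
move=> ac cb; rewrite ltNge le_min; apply/negP => /andP[ca cb'].
have [s sa fs] := cvgNy_preimage_left fc fl ca.
have [t bt ft] := cvgNy_preimage_right fc fr cb'.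
have sc : s < c by lra.
have ct : c < t by lra.
exact: f2 sc ct fs (esym ft).
Qed.

Lemma cvgNy_exists_max : exists m, forall t, f t <= f m.
Proof.
have [a [_ fa]] := cvgrNy_lt fl (f 0).
have [b [_ fb]] := cvgrNy_lt fr (f 0).
have a0 : Num.min a 0 <= 0 by rewrite ge_min lexx orbT.
have b0 : 0 <= Num.max b 0 by rewrite le_max lexx orbT.
have [m _ fm] := EVT_max (le_trans a0 b0) (continuous_subspaceT fc).
have f0m : f 0 <= f m by apply: fm; rewrite in_itv /= a0 b0.
exists m => t; have [ta|a_le_t] := ltP t (Num.min a 0).
  by apply/ltW/(lt_le_trans _ f0m)/fa; move: ta; rewrite lt_min => /andP[].
have [bt|tb] := ltP (Num.max b 0) t.
  by apply/ltW/(lt_le_trans _ f0m)/fb; move: bt; rewrite gt_max => /andP[].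
by apply: fm; rewrite in_itv /= a_le_t tb.
Qed.

Lemma increasing_to_max m : (forall t, f t <= f m) ->
  forall s t, s < t -> t <= m -> f s < f t.
Proof.
move=> fm s t st; rewrite le_eqVlt => /predU1P[tm|tm]; last first.
  by have := min_lt_interior st tm; rewrite min_l.
rewrite {}tm in st *.
have sm : s < (s + m) / 2 by lra.
have ms : (s + m) / 2 < m by lra.
by have := min_lt_interior sm ms; rewrite min_l // => /lt_le_trans; apply.
Qed.

End PeakedFunctions.

Lemma decreasing_from_max f m : continuous f -> at_most_two_to_one f ->
  f @ -oo --> -oo -> f @ +oo --> -oo -> (forall t, f t <= f m) ->
  forall s t, m <= s -> s < t -> f t < f s.
Proof.
move=> fc f2 /cvgNy_compNP fl /cvgy_compNP fr fm s t ms st.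
have fm' u : (f \o -%R) u <= (f \o -%R) (- m) by rewrite /= opprK.
have := increasing_to_max (continuous_reflect fc) (at_most_two_to_one_reflect f2)
  fr fl fm' (_ : - t < - s) (_ : - s <= - m).
by rewrite /= !opprK; apply; rewrite ?ltrN2 ?lerN2.
Qed.

Lemma neg_tail_cvgNy f a : continuous f -> `|f t| @[t --> +oo] --> +oo ->
  f a < 0 -> (forall t, a <= t -> f t != 0) -> f @ +oo --> -oo.
Proof.
move=> fc fy fa fnz.
have fneg t : a <= t -> f t < 0.
  move=> at_; rewrite ltNge; apply/negP => ft.
  have [|c /andP[ac _] fc0] := ivt_sign fc at_ (_ : (f a - 0) * (f t - 0) <= 0).
    by nra.
  by move: (fnz c ac); rewrite fc0 eqxx.
apply/cvgNry/cvgryPgt => A; near=> t.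
have at_ : a <= t by near: t; apply: nbhs_pinfty_ge; exact: num_real.
rewrite opprfctE /= -(ltr0_norm (fneg t at_)); near: t; exact: cvgry_gt fy A.
Unshelve. all: by end_near. Qed.

Lemma cvgy_norm_dichotomy f : continuous f -> `|f t| @[t --> +oo] --> +oo ->
  f @ +oo --> +oo \/ f @ +oo --> -oo.
Proof.
move=> fc fy; have [B [_ fB]] := cvgry_gt fy 0.
have fnz t : B + 1 <= t -> f t != 0 by move=> Bt; rewrite -normr_gt0 fB //; lra.
have [fB1|fB1|fB1] := ltgtP (f (B + 1)) 0.
- by right; exact: neg_tail_cvgNy fc fy fB1 fnz.
- left; apply/cvgNrNy; apply: (neg_tail_cvgNy (a := B + 1) (continuousNfun fc)).
  + by under eq_fun do rewrite opprfctE normrN.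
  + by rewrite opprfctE oppr_lt0.
  + by move=> t /fnz; rewrite opprfctE oppr_eq0.
- by have := fnz _ (lexx _); rewrite fB1 eqxx.
Qed.

Lemma cvgNy_norm_dichotomy f : continuous f -> `|f t| @[t --> -oo] --> +oo ->
  f @ -oo --> +oo \/ f @ -oo --> -oo.
Proof.
move=> fc /cvgNy_compNP fy.
by have [/cvgNy_compNP|/cvgNy_compNP] := cvgy_norm_dichotomy (continuous_reflect fc) fy;
  [left | right].
Qed.

Lemma no_interior_dip f a u b : continuous f -> at_most_two_to_one f ->
  f @ +oo --> -oo -> a < u -> u < b -> f u < f a -> f u < f b -> False.
Proof.
move=> fc f2 fr au ub ua ubb.
pose v := (f u + Num.min (f a) (f b)) / 2.
have [ma mb] : Num.min (f a) (f b) <= f a /\ Num.min (f a) (f b) <= f b.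
  by split; rewrite ge_min lexx ?orbT.
have um : f u < Num.min (f a) (f b) by rewrite lt_min ua ubb.
have [uv va vb] : [/\ f u < v, v < f a & v < f b] by rewrite /v; split; lra.
have [|x /andP[ax xu] fx] := ivt_sign fc (ltW au) (_ : (f a - v) * (f u - v) <= 0).
  by nra.
have [|y /andP[uy yb] fy] := ivt_sign fc (ltW ub) (_ : (f u - v) * (f b - v) <= 0).
  by nra.
have [z bz fz] := cvgNy_preimage_right fc fr (ltW vb).
have xu' : x < u.
  by rewrite lt_neqAle xu andbT; apply/eqP => xu_eq; move: uv; rewrite -fx xu_eq ltxx.
have uy' : u < y.
  by rewrite lt_neqAle uy andbT; apply/eqP => uy_eq; move: uv; rewrite -fy uy_eq ltxx.
have yb' : y < b.
  by rewrite lt_neqAle yb andbT; apply/eqP => yb_eq; move: vb; rewrite -fy yb_eq ltxx.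
have xy : x < y by lra.
have yz : y < z by lra.
exact: f2 xy yz (etrans fx (esym fy)) (etrans fy (esym fz)).
Qed.

Lemma cvg_opposite_ends_injective f : continuous f -> at_most_two_to_one f ->
  f @ -oo --> +oo -> f @ +oo --> -oo -> injective f.
Proof.
move=> fc f2 fl fr.
suff lt_neq a b : a < b -> f a <> f b.
  move=> a b fab; have [ab|ba|//] := ltgtP a b.
  - by case: (lt_neq _ _ ab fab).
  - by case: (lt_neq _ _ ba (esym fab)).
move=> ab fab; pose u := (a + b) / 2.
have au : a < u by rewrite /u; lra.
have ub : u < b by rewrite /u; lra.
have [ua|ua|ua] := ltgtP (f u) (f a).
- by apply: (no_interior_dip fc f2 fr au ub ua); rewrite -fab.
- (* a bump of f is a dip of t |-> - f (- t) *)
  have fNr : (- (f \o -%R)) @ +oo --> -oo by apply/cvgNrNy/cvgNy_compNP.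
  have bu : - b < - u by rewrite ltrN2.
  have ua' : - u < - a by rewrite ltrN2.
  apply: (no_interior_dip (continuousNfun (continuous_reflect fc))
    (at_most_two_to_oneN (at_most_two_to_one_reflect f2)) fNr bu ua');
    by rewrite opprfctE /= !opprK ltrN2 -?fab.
- exact: f2 au ub (esym ua) (etrans ua fab).
Qed.

Lemma cvg_opposite_ends_surjective f : continuous f ->
  f @ -oo --> +oo -> f @ +oo --> -oo -> forall v, exists t, f t = v.
Proof.
move=> fc fl fr v; have [a [_ fa]] := cvgry_ge fl v.
have a1 : a - 1 < a by lra.
have [t _ ft] := cvgNy_preimage_right fc fr (fa _ a1).
by exists t.
Qed.

Lemma coercive_injective_surjective f : continuous f ->
  `|f t| @[t --> -oo] --> +oo -> `|f t| @[t --> +oo] --> +oo -> injective f ->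
  forall v, exists t, f t = v.
Proof.
move=> fc fl fr finj.
wlog fNy : f fc fl fr finj / f @ +oo --> -oo.
  move=> surj; have [/cvgNrNy fy|] := cvgy_norm_dichotomy fc fr; last exact: surj.
  move=> v; have [|||t ft] := surj (- f) (continuousNfun fc) _ _ _ fy (- v).
  - by under eq_fun do rewrite opprfctE normrN.
  - by under eq_fun do rewrite opprfctE normrN.
  - by move=> s t /oppr_inj /finj.
  - by exists t; apply: oppr_inj.
have [fl'|fl'] := cvgNy_norm_dichotomy fc fl.
  exact: cvg_opposite_ends_surjective.
by case: (cvgNy_not_injective fc fl' fNy).
Qed.

Lemma not_injective_cvgNy f : continuous f -> at_most_two_to_one f ->
  `|f t| @[t --> -oo] --> +oo -> f @ +oo --> -oo -> ~ injective f -> f @ -oo --> -oo.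
Proof.
move=> fc f2 fl fr finj; have [fl'|//] := cvgNy_norm_dichotomy fc fl.
by case: finj; exact: cvg_opposite_ends_injective.
Qed.

Lemma continuous_injective_straddle f t e : continuous f -> injective f -> 0 < e ->
  (f (t - e) - f t) * (f (t + e) - f t) < 0.
Proof.
move=> fc finj e0.
have inR u : u \in `]-oo, +oo[ by rewrite in_itv.
have l1 : t - e < t by lra.
have l2 : t < t + e by lra.
have [up|down] := itv_continuous_inj_mono (I := `]-oo, +oo[)
  (continuous_subspaceT fc) (in2W finj).
- by have := up _ _ (inR _) (inR _) l1; have := up _ _ (inR _) (inR _) l2; nra.
- by have := down _ _ (inR _) (inR _) l1; have := down _ _ (inR _) (inR _) l2; nra.
Qed.

End RealFunctions.

Section FibrewiseMaps.
Context {R : realType} {T : topologicalType}.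
Implicit Types h k : T * R -> R.

Lemma fibre_continuous h e : continuous h -> continuous (fun t => h (e, t)).
Proof. by move=> hc; apply: continuous_comp_pair => // t; [exact: cvg_cst | exact: cvg_id]. Qed.

Lemma section_continuous h t : continuous h -> continuous (fun e => h (e, t)).
Proof. by move=> hc; apply: continuous_comp_pair => // e; [exact: cvg_id | exact: cvg_cst]. Qed.

Lemma fibrewise_inverse_continuous h k : continuous h ->
  (forall e, injective (fun t => h (e, t))) -> (forall x, h (x.1, k x) = x.2) ->
  continuous k.
Proof.
move=> hc hinj hk x0; apply/cvgrPdist_le => eps eps0.
pose phi x := (h (x.1, k x0 - eps) - x.2) * (h (x.1, k x0 + eps) - x.2).
have phic : continuous phi.
  have hc' t : continuous (fun x : T * R => h (x.1, t)).
    by apply: continuous_comp_pair => // x; [exact: cvg_fst | exact: cvg_cst].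
  move=> x; apply: cvgM; apply: cvgB;
    [exact: hc' | exact: cvg_snd | exact: hc' | exact: cvg_snd].
have phi0 : phi x0 < 0.
  rewrite /phi -(hk x0).
  exact: continuous_injective_straddle (fibre_continuous (e := x0.1) hc) (hinj x0.1) eps0.
near=> x.
have phix : phi x < 0 by near: x; exact: cvgr_lt _ (phic x0) _ phi0.
have epsW : k x0 - eps <= k x0 + eps by lra.
have [c /andP[c1 c2] hxc] := ivt_sign (fibre_continuous (e := x.1) hc) epsW (ltW phix).
have -> : k x = c by apply: (hinj x.1); rewrite /= hk hxc.
by rewrite ler_norml; apply/andP; split; lra.
Unshelve. all: by end_near. Qed.

Lemma fibrewise_inverse h : continuous h -> (forall e, injective (fun t => h (e, t))) ->
  (forall e v, exists t, h (e, t) = v) ->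
  exists k, [/\ continuous k, forall x, h (x.1, k x) = x.2 & forall x, k (x.1, h x) = x.2].
Proof.
move=> hc hinj hsurj; have [k hk] := choice (fun x : T * R => hsurj x.1 x.2).
exists k; split => //; first exact: fibrewise_inverse_continuous hc hinj hk.
by case=> e t; apply: (hinj e); rewrite /= (hk (e, h (e, t))).
Qed.

Lemma fibrewise_homeomorphism h k : continuous h -> continuous k ->
  (forall x, h (x.1, k x) = x.2) -> (forall x, k (x.1, h x) = x.2) ->
  homeomorphism (fun x => (x.1, h x)).
Proof.
move=> hc kc hk kh; exists (fun x => (x.1, k x)); split.
- by apply: continuous_pair => // x; exact: cvg_fst.
- by apply: continuous_pair => // x; exact: cvg_fst.
- by case=> e t /=; rewrite (kh (e, t)).
- by case=> e t /=; rewrite (hk (e, t)).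
Qed.

Lemma reflect_homeomorphism : homeomorphism (fun x : T * R => (x.1, - x.2)).
Proof.
apply: (fibrewise_homeomorphism (k := fun x => - x.2)) => [||x|x]; rewrite ?opprK //;
  by move=> x; apply: continuousN; exact: cvg_snd.
Qed.

Definition global_fold (g : T * R -> R) := exists g1 g2 : T * R -> R,
  [/\ homeomorphism (fun x => (x.1, g1 x)), homeomorphism (fun x => (x.1, g2 x))
    & forall x, g2 (x.1, g (x.1, g1 x)) = - `|x.2|].

Lemma global_foldN g : global_fold (- g) -> global_fold g.
Proof.
move=> [g1 [g2 [s1 s2 fold]]]; exists g1, (fun x => g2 (x.1, - x.2)); split => //.
exact: homeomorphism_comp reflect_homeomorphism s2.
Qed.

End FibrewiseMaps.

Section FoldNormalForm.
Unset Implicit Arguments.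
Context {R : realType} {T : topologicalType}.
Variable g : T * R -> R.
Hypothesis gc : continuous g.
Hypothesis g2 : forall e, at_most_two_to_one (fun t => g (e, t)).
Hypothesis gl : forall e, (fun t => g (e, t)) @ -oo --> -oo.
Hypothesis gr : forall e, (fun t => g (e, t)) @ +oo --> -oo.

Let gec e : continuous (fun t => g (e, t)) := fibre_continuous gc.
Let gsc t : continuous (fun e => g (e, t)) := section_continuous gc.
Let fstc : continuous (@fst T R) := fun x => cvg_fst.

Let argmax := choice (fun e => cvgNy_exists_max (gec e) (gl e) (gr e)).
Let m : T -> R := projT1 argmax.
Let m_max e t : g (e, t) <= g (e, m e) := projT2 argmax e t.
Set Implicit Arguments.

Let increasing_to_m e s t : s < t -> t <= m e -> g (e, s) < g (e, t).
Proof.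
have incr := increasing_to_max (gec e) (g2 e) (gl e) (gr e) (m_max e).
by move=> st tm; exact: incr st tm.
Qed.

Let decreasing_from_m e s t : m e <= s -> s < t -> g (e, t) < g (e, s).
Proof.
have decr := decreasing_from_max (gec e) (g2 e) (gl e) (gr e) (m_max e).
by move=> ms st; exact: decr ms st.
Qed.

Let argmax_gt e0 s : s < m e0 -> \forall e \near e0, s < m e.
Proof.
move=> sm; have gsm := increasing_to_m sm (lexx _).
pose c := (g (e0, s) + g (e0, m e0)) / 2; near=> e.
have gs : g (e, s) < c by near: e; apply: cvgr_lt (gsc s e0) _ _; rewrite /c; lra.
have gm : c < g (e, m e0) by near: e; apply: cvgr_gt (gsc (m e0) e0) _ _; rewrite /c; lra.
by rewrite ltNge; apply/negP => ms; have := decreasing_from_m ms sm; lra.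
Unshelve. all: by end_near. Qed.

Let argmax_lt e0 s : m e0 < s -> \forall e \near e0, m e < s.
Proof.
move=> ms; have gsm := decreasing_from_m (lexx _) ms.
pose c := (g (e0, s) + g (e0, m e0)) / 2; near=> e.
have gs : g (e, s) < c by near: e; apply: cvgr_lt (gsc s e0) _ _; rewrite /c; lra.
have gm : c < g (e, m e0) by near: e; apply: cvgr_gt (gsc (m e0) e0) _ _; rewrite /c; lra.
by rewrite ltNge; apply/negP => sm; have := increasing_to_m ms sm; lra.
Unshelve. all: by end_near. Qed.

Let m_continuous : continuous m.
Proof.
move=> e0; apply/cvgrPdist_le => eps eps0; near=> e.
have lo : m e0 - eps < m e by near: e; apply: argmax_gt; lra.
have hi : m e < m e0 + eps by near: e; apply: argmax_lt; lra.
by rewrite ler_norml; apply/andP; split; lra.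
Unshelve. all: by end_near. Qed.

Let max_continuous : continuous (fun x : T * R => g (x.1, m x.1)).
Proof.
apply: (continuous_comp_pair gc fstc) => x.
by apply: continuous_comp; [exact: cvg_fst | exact: m_continuous].
Qed.

(* h (e, t) is g (e, t) - max on the left branch and max - g (e, t) on the
   right one: a strictly increasing bijection of R with g - max = - |h|. *)
Let h x := g (x.1, Num.min x.2 (m x.1)) - g (x.1, Num.max x.2 (m x.1)).

Let h_continuous : continuous h.
Proof.
have mc : continuous (fun x : T * R => m x.1).
  by move=> x; apply: continuous_comp; [exact: cvg_fst | exact: m_continuous].
move=> x; apply: cvgB; apply: (continuous_comp_pair gc fstc) => y.
- by apply: continuous_min; [exact: cvg_snd | exact: mc].
- by apply: continuous_max; [exact: cvg_snd | exact: mc].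
Qed.

Let h_left e t : t <= m e -> h (e, t) = g (e, t) - g (e, m e).
Proof. by move=> tm; rewrite /h /= (min_l tm) (max_r tm). Qed.

Let h_right e t : m e <= t -> h (e, t) = g (e, m e) - g (e, t).
Proof. by move=> mt; rewrite /h /= (min_r mt) (max_l mt). Qed.

Let h_increasing e s t : s < t -> h (e, s) < h (e, t).
Proof.
move=> st; have := m_max e s; have := m_max e t.
have [sm|ms] := leP s (m e); have [tm|mt] := leP t (m e).
- by rewrite (h_left sm) (h_left tm); have := increasing_to_m st tm; lra.
- by rewrite (h_left sm) (h_right (ltW mt)); have := decreasing_from_m (lexx _) mt; lra.
- lra.
- by rewrite (h_right (ltW ms)) (h_right (ltW mt)); have := decreasing_from_m (ltW ms) st; lra.
Qed.

Let h_surjective e v : exists t, h (e, t) = v.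
Proof.
have [v0|v0] := leP v 0.
- have [|t tm gtv] := cvgNy_preimage_left (a := m e) (v := g (e, m e) + v) (gec e) (gl e).
    by lra.
  by exists t; rewrite h_left // gtv; lra.
- have [|t mt gtv] := cvgNy_preimage_right (a := m e) (v := g (e, m e) - v) (gec e) (gr e).
    by lra.
  by exists t; rewrite h_right // gtv; lra.
Qed.

Lemma cvgNy_global_fold : global_fold g.
Proof.
have hinj e : injective (fun t => h (e, t)).
  by apply: inc_inj; apply: le_mono => s t; exact: h_increasing.
have [k [kc hk kh]] := fibrewise_inverse h_continuous hinj h_surjective.
exists k, (fun x => x.2 - g (x.1, m x.1)); split.
- exact: fibrewise_homeomorphism kc h_continuous kh hk.
- apply: (fibrewise_homeomorphism (k := fun x => x.2 + g (x.1, m x.1))) => [x|x|x|x] /=.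
  + by apply: cvgB; [exact: cvg_snd | exact: max_continuous].
  + by apply: cvgD; [exact: cvg_snd | exact: max_continuous].
  + exact: addrK.
  + exact: subrK.
- case=> e t /=; have gk := m_max e (k (e, t)).
  have [km|mk] := leP (k (e, t)) (m e).
  + have := hk (e, t); rewrite /= h_left // => ht.
    by rewrite ler0_norm ?opprK; lra.
  + have := hk (e, t); rewrite /= h_right ?(ltW mk) // => ht.
    by rewrite ger0_norm; lra.
Qed.

End FoldNormalForm.

Section CoerciveFamilies.
Context {R : realType} {T : topologicalType}.
Implicit Types g : T * R -> R.

Definition coercive_on_compacts g := forall S : set T, compact S -> forall c : R,
  exists B, forall e t, S e -> `|g (e, t)| <= c -> `|t| <= B.

Lemma proper_coercive_on_compacts g :
  proper_map (fun x => (x.1, g x)) -> coercive_on_compacts g.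
Proof.
move=> [_ Gk] S cS c.
have cK : compact (S `*` `[- c, c]) by apply: compact_setX => //; exact: segment_compact.
have cQ : compact (snd @` ((fun x => (x.1, g x)) @^-1` (S `*` `[- c, c]))).
  by apply: continuous_compact (Gk _ cK); apply: continuous_subspaceT => x; exact: cvg_snd.
have [M [_ QM]] := compact_bounded cQ.
exists (M + 1) => e t Se gc; apply: (QM (M + 1)); first lra.
by exists (e, t) => //; split => //=; rewrite in_itv /= -ler_norml.
Qed.

Lemma coercive_on_compactsN g : coercive_on_compacts g -> coercive_on_compacts (- g).
Proof.
move=> gco S cS c; have [B gB] := gco S cS c.
by exists B => e t Se; rewrite opprfctE normrN; exact: gB.
Qed.

Lemma coercive_on_compacts_reflect g :
  coercive_on_compacts g -> coercive_on_compacts (fun x => g (x.1, - x.2)).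
Proof.
move=> gco S cS c; have [B gB] := gco S cS c.
by exists B => e t Se /(gB e (- t) Se); rewrite normrN.
Qed.

Lemma coercive_fibre_cvgy g e :
  coercive_on_compacts g -> `|g (e, t)| @[t --> +oo] --> +oo.
Proof.
move=> gco; apply/cvgryPgt => c; have [B gB] := gco _ (@compact_set1 _ e) c.
near=> t; have Bt : B < t by near: t; apply: nbhs_pinfty_gt; exact: num_real.
by rewrite ltNge; apply/negP => /(gB e t erefl); have := ler_norm t; lra.
Unshelve. all: by end_near. Qed.

Lemma coercive_fibre_cvgNy g e :
  coercive_on_compacts g -> `|g (e, t)| @[t --> -oo] --> +oo.
Proof.
move=> /coercive_on_compacts_reflect gco; apply/cvgNy_compNP.
exact: coercive_fibre_cvgy gco.
Qed.

Lemma injective_fibres_homeomorphism g : continuous g -> coercive_on_compacts g ->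
  (forall e, injective (fun t => g (e, t))) -> homeomorphism (fun x => (x.1, g x)).
Proof.
move=> gc gco ginj.
have gsurj e := coercive_injective_surjective (fibre_continuous gc)
  (coercive_fibre_cvgNy e gco) (coercive_fibre_cvgy e gco) (ginj e).
have [k [kc gk kg]] := fibrewise_inverse gc ginj gsurj.
exact: fibrewise_homeomorphism gc kc gk kg.
Qed.

End CoerciveFamilies.

Section CoerciveFamiliesOnNormedSpaces.
Context {R : realType} {E : normedModType R}.
Implicit Types g : E * R -> R.

Lemma cvgNy_fibre_transfer g e e' : continuous g -> coercive_on_compacts g ->
  (fun t => g (e, t)) @ +oo --> -oo -> (fun t => g (e', t)) @ +oo --> -oo.
Proof.
move=> gc gco ge.
(* on the segment from e to e' the zeros of g lie in |t| <= B, so beyond B the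
   sign of g (., t) is constant along the segment *)
pose p l : E := e + l *: (e' - e).
have pc : continuous p.
  by move=> l; apply: cvgD; [exact: cvg_cst | apply: cvgZ; [exact: cvg_id | exact: cvg_cst]].
have cS : compact (p @` `[0, 1]).
  by apply: continuous_compact; [exact: continuous_subspaceT | exact: segment_compact].
have [B gB] := gco _ cS 0.
have nz l t : l \in `[0, 1] -> B < t -> g (p l, t) != 0.
  move=> l01 Bt; apply/eqP => g0; have := gB _ t (ex_intro2 _ _ l l01 erefl).
  by rewrite g0 normr0 lexx => /(_ isT); have := ler_norm t; lra.
have [B1 [_ gB1]] := cvgrNy_lt ge 0.
have [BM B1M] : B <= Num.max B B1 /\ B1 <= Num.max B B1 by rewrite !le_max !lexx orbT.
pose t0 := Num.max B B1 + 1.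
have Bt0 : B < t0 by rewrite /t0; lra.
have get0 : g (e, t0) < 0 by apply: gB1; rewrite /t0; lra.
have p0 : p 0 = e by rewrite /p scale0r addr0.
have p1 : p 1 = e' by rewrite /p scale1r addrC subrK.
have gpc : continuous (fun l => g (p l, t0)).
  by apply: continuous_comp_pair => // l; exact: cvg_cst.
have ge't0 : g (e', t0) < 0.
  rewrite ltNge; apply/negP => ge't0.
  have [|l /andP[l0 l1] gpl] := ivt_sign gpc ler01 (_ : (g (p 0, t0) - 0) * (g (p 1, t0) - 0) <= 0).
    by rewrite p0 p1; nra.
  have l01 : l \in `[0, 1] by rewrite in_itv /= l0 l1.
  by move: (nz l t0 l01 Bt0); rewrite gpl eqxx.
apply: (neg_tail_cvgNy (fibre_continuous gc) (coercive_fibre_cvgy e' gco) ge't0) => t t0t.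
have i1 : (1 : R) \in `[0, 1] by rewrite in_itv /= ler01 lexx.
by rewrite -p1; apply: nz i1 _; rewrite /t0 in t0t; lra.
Qed.

Lemma cvgNy_fibre_global_fold g e0 : continuous g -> coercive_on_compacts g ->
  (forall e, at_most_two_to_one (fun t => g (e, t))) ->
  (fun t => g (e0, t)) @ +oo --> -oo -> ~ injective (fun t => g (e0, t)) ->
  global_fold g.
Proof.
move=> gc gco g2 gr0 ninj.
have gl0 := not_injective_cvgNy (fibre_continuous gc) (g2 e0)
  (coercive_fibre_cvgNy e0 gco) gr0 ninj.
have grc : continuous (fun x : E * R => g (x.1, - x.2)).
  apply: (continuous_comp_pair gc) => x; first exact: cvg_fst.
  by apply: continuousN; exact: cvg_snd.
have gl e : (fun t => g (e, t)) @ -oo --> -oo.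
  move/cvgNy_compNP: gl0 => gl0; apply/cvgNy_compNP.
  exact: cvgNy_fibre_transfer e grc (coercive_on_compacts_reflect gco) gl0.
exact: cvgNy_global_fold gc g2 gl (fun e => cvgNy_fibre_transfer e gc gco gr0).
Qed.

Lemma not_injective_global_fold g e0 : continuous g -> coercive_on_compacts g ->
  (forall e, at_most_two_to_one (fun t => g (e, t))) ->
  ~ injective (fun t => g (e0, t)) -> global_fold g.
Proof.
move=> gc gco g2 ninj.
have [gy|gNy] := cvgy_norm_dichotomy (fibre_continuous gc) (coercive_fibre_cvgy e0 gco).
- apply: global_foldN; apply: (cvgNy_fibre_global_fold (e0 := e0)).
  + exact: continuousNfun.
  + exact: coercive_on_compactsN.
  + by move=> e; exact: at_most_two_to_oneN (g2 e).
  + exact/cvgNrNy.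
  + by move=> ginj; apply: ninj => s t gst; apply: ginj; rewrite opprfctE /= gst.
- exact: cvgNy_fibre_global_fold gc gco g2 gNy ninj.
Qed.

End CoerciveFamiliesOnNormedSpaces.

Section Preimages.
Context {R : realType} {T : Type}.
Variable g : T * R -> R.
Let G x := (x.1, g x).

Lemma no_three_preimages_fibre :
  (forall y, ~ has_three_preimages G y) -> forall e, at_most_two_to_one (fun t => g (e, t)).
Proof.
move=> G3 e a b c ab bc gab gbc; apply: (G3 (e, g (e, b))).
have neq s t : s < t -> (e, s) <> (e, t) by move=> st [st']; move: st; rewrite st' ltxx.
exists (e, a), (e, b), (e, c); split; [exact: neq | exact: neq (lt_trans ab bc) | exact: neq |].
by split; rewrite /G /= ?gab ?gbc.
Qed.

Lemma two_preimages_fibre y : has_two_preimages G y -> exists e, ~ injective (fun t => g (e, t)).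
Proof.
move=> [[e s] [[e' t] [st <- [ee' gts]]]]; subst e'; exists e => ginj.
by apply: st; rewrite (ginj t s gts).
Qed.

Lemma no_two_preimages_fibre :
  ~ (exists y, has_two_preimages G y) -> forall e, injective (fun t => g (e, t)).
Proof.
move=> G2 e s t gst; have [//|st] := eqVneq s t; case: G2.
exists (e, g (e, s)), (e, s), (e, t); split => //; first by move=> [st']; rewrite st' eqxx in st.
by rewrite /G /= gst.
Qed.

End Preimages.

Theorem proposition3p2 (R : realType) (E : completeNormedModType R)
    (g : E * R -> R) :
  let G := fun x : E * R => (x.1, g x) in
  proper_map G ->
  (forall y : E * R, ~ has_three_preimages G y) ->
  ((exists y : E * R, has_two_preimages G y) ->
     exists (g1 g2 : E * R -> R),
       let sigma1 := fun x : E * R => (x.1, g1 x) in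
       let sigma2 := fun x : E * R => (x.1, g2 x) in
       [/\ homeomorphism sigma1, homeomorphism sigma2 &
           forall x : E * R, sigma2 (G (sigma1 x)) = (x.1, - `|x.2|)])
  /\
  (~ (exists y : E * R, has_two_preimages G y) -> homeomorphism G).
Proof.
move=> G Gp G3; have gc : continuous g.
  by move=> x; apply: (@continuous_comp _ _ _ G snd x (Gp.1 x)); exact: cvg_snd.
have gco := proper_coercive_on_compacts Gp.
have g2 := no_three_preimages_fibre G3.
split=> [[y /two_preimages_fibre [e0 ninj]] | G2].
- have [g1 [g2' [s1 s2 fold]]] := not_injective_global_fold gc gco g2 ninj.
  by exists g1, g2'; split => // x; rewrite /G /= fold.
- exact: injective_fibres_homeomorphism gc gco (no_two_preimages_fibre G2).
Qed.
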